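(* Let $N\geq 1$ and let $K$ be an $N\times N$ real matrix with non-negative entries which is diagonally symmetrizable, i.e. $K=D\cdot S$ for some diagonal matrix $D$ with positive diagonal entries and some symmetric real matrix $S$. Let $R_0=\rho(K)$ be the spectral radius of $K$ and define $R_e:[0,1]^N\to\mathbb{R}_+$ by $R_e(\eta)=\rho\big(K\cdot \mathrm{Diag}(\eta)\big)$, where $\mathrm{Diag}(\eta)$ is the diagonal matrix with diagonal entries $\eta_1,\dots,\eta_N$. (i) If every eigenvalue of $K$ is a non-negative real number, then $R_e$ is convex on $[0,1]^N$. (ii) If $R_0$ is a simple eigenvalue of $K$ and every eigenvalue of $K$ belongs to $(-\infty,0]\cup\{R_0\}$, then $R_e$ is concave on $[0,1]^N$.
   Context: $\rho(A)$ denotes the spectral radius of a square matrix $A$ (maximum modulus of its eigenvalues). An eigenvalue is simple if its algebraic multiplicity is $1$. *)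

From mathcomp Require Import all_boot all_order all_algebra.
From mathcomp Require Import classical_sets reals.
From mathcomp.real_closed Require Import complex.
Set Implicit Arguments. Unset Strict Implicit. Unset Printing Implicit Defensive.
Import Order.TTheory GRing.Theory Num.Theory.
Local Open Scope ring_scope.
Local Open Scope classical_set_scope.

Definition cmod (R : rcfType) (z : R[i]) : R :=
  Num.sqrt (complex.Re z ^+ 2 + complex.Im z ^+ 2).

Definition cplx_mx (R : rcfType) (n : nat) (A : 'M[R]_n) : 'M[R[i]]_n :=
  map_mx (real_complex R) A.

Definition eigenvalues (R : rcfType) (n : nat) (A : 'M[R]_n) : set R[i] :=
  [set z | root (char_poly (cplx_mx A)) z].

Definition alg_mult (R : rcfType) (n : nat) (A : 'M[R]_n) (z : R[i]) : nat :=
  mup z (char_poly (cplx_mx A)).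

(* spectral radius: maximum modulus of the eigenvalues (a finite nonempty set
   when n >= 1, so the supremum is a maximum) *)
Definition spectral_radius (R : realType) (n : nat) (A : 'M[R]_n) : R :=
  sup [set cmod z | z in eigenvalues A].

Definition diag_symmetrizable (R : realType) (n : nat) (K : 'M[R]_n) : Prop :=
  exists (d : 'rV[R]_n) (S : 'M[R]_n),
    (forall i, 0 < d 0 i) /\ S^T = S /\ K = diag_mx d *m S.

Definition in_unit_cube (R : realType) (n : nat) (eta : 'rV[R]_n) : Prop :=
  forall i, 0 <= eta 0 i <= 1.

Definition Re_fun (R : realType) (n : nat) (K : 'M[R]_n) (eta : 'rV[R]_n) : R :=
  spectral_radius (K *m diag_mx eta).

Definition convex_on_cube (R : realType) (n : nat) (f : 'rV[R]_n -> R) : Prop :=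
  forall (x y : 'rV[R]_n) (t : R), in_unit_cube x -> in_unit_cube y ->
    0 <= t <= 1 -> f (t *: x + (1 - t) *: y) <= t * f x + (1 - t) * f y.

Definition concave_on_cube (R : realType) (n : nat) (f : 'rV[R]_n -> R) : Prop :=
  forall (x y : 'rV[R]_n) (t : R), in_unit_cube x -> in_unit_cube y ->
    0 <= t <= 1 -> t * f x + (1 - t) * f y <= f (t *: x + (1 - t) *: y).

(* Write K = D S and G = Diag(sqrt(eta_i d_i)).  K Diag(eta) = D (S Diag(eta))
   has the nonzero eigenvalues of S Diag(eta) D = (S G) G, hence of the
   symmetric nonnegative matrix G S G; so R_e(eta) is the top eigenvalue of
   G S G, i.e. the maximum of the Rayleigh quotient, attained at an
   eigenvector.  As K is similar to D^(1/2) S D^(1/2), hypothesis (i) makes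
   the form of S positive semidefinite, and hypothesis (ii) leaves it only one
   positive direction, i.e. gives the reverse Cauchy-Schwarz inequality.

   (i) For a top eigenvector x at eta = t eta1 + (1-t) eta2 put c = x G S:
   e |-> c Diag(e d) c^T is linear, equals R_e(eta) (x G S G x^T) at e = eta,
   and by Cauchy-Schwarz is at most R_e(e) (x G S G x^T) everywhere.
   (ii) Take top eigenvectors u_k at eta_k scaled to |u_k|^2 = R_e(eta_k), and
   write t u1 G1 + (1-t) u2 G2 = x G with |x|^2 <= s := t R_e(eta1) +
   (1-t) R_e(eta2).  Reverse Cauchy-Schwarz bounds the S-form of x G below by
   s^2, and the Rayleigh bound bounds it above by R_e(eta) |x|^2 <= R_e(eta) s. *)

From mathcomp Require Import all_boot all_order all_algebra.
From mathcomp Require Import classical_sets reals.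
From mathcomp.real_closed Require Import complex.
From mathcomp Require Import spectral sesquilinear.
From mathcomp Require Import ring lra.
Import Order.TTheory GRing.Theory Num.Theory Num.Def.
Local Open Scope ring_scope.
Set Implicit Arguments. Unset Strict Implicit. Unset Printing Implicit Defensive.

Section BilinearForm.
Variable R : realFieldType.

Definition bform n (A : 'M[R]_n) (u v : 'rV[R]_n) : R := (u *m A *m v^T) 0 0.

Definition sqnorm n (x : 'rV[R]_n) : R := \sum_i x 0 i ^+ 2.

Definition rayleigh_max n (A : 'M[R]_n) (lam : R) :=
  (forall x, bform A x x <= lam * sqnorm x) /\
  exists2 x : 'rV_n, x *m A = lam *: x & x != 0.

Definition psd_form n (A : 'M[R]_n) := forall v, 0 <= bform A v v.

(* Reverse Cauchy-Schwarz: the form of a symmetric matrix with at most one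
   positive eigenvalue. *)
Definition lorentzian n (A : 'M[R]_n) :=
  forall u v, 0 < bform A u u -> bform A u u * bform A v v <= bform A u v ^+ 2.

Lemma bform_sym n (A : 'M[R]_n) u v : A^T = A -> bform A u v = bform A v u.
Proof.
move=> Asym; rewrite /bform.
transitivity ((u *m A *m v^T)^T 0 0); first by rewrite [RHS]mxE.
by rewrite !trmx_mul trmxK Asym mulmxA.
Qed.

Lemma bform_linearl n (A : 'M[R]_n) a b u v w :
  bform A (a *: u + b *: v) w = a * bform A u w + b * bform A v w.
Proof. by rewrite /bform !mulmxDl -!scalemxAl !mxE. Qed.

Lemma bform_linearr n (A : 'M[R]_n) a b u v w :
  bform A w (a *: u + b *: v) = a * bform A w u + b * bform A w v.
Proof. by rewrite /bform linearD /= !linearZ /= mulmxDr -!scalemxAr !mxE. Qed.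

Lemma bformNr n (A : 'M[R]_n) u v : bform A u (- v) = - bform A u v.
Proof. by rewrite /bform linearN /= mulmxN mxE. Qed.

Lemma bform_comb n (A : 'M[R]_n) a b u v : A^T = A ->
  bform A (a *: u + b *: v) (a *: u + b *: v) =
  a ^+ 2 * bform A u u + 2 * a * b * bform A u v + b ^+ 2 * bform A v v.
Proof. by move=> Asym; rewrite bform_linearl !bform_linearr (bform_sym _ _ Asym); ring. Qed.

Lemma bform_congr n (A B : 'M[R]_n) u v :
  bform (B *m A *m B^T) u v = bform A (u *m B) (v *m B).
Proof. by rewrite /bform trmx_mul !mulmxA. Qed.

Lemma bform_linear_mx n (A B : 'M[R]_n) a b u v :
  bform (a *: A + b *: B) u v = a * bform A u v + b * bform B u v.
Proof. by rewrite /bform mulmxDr mulmxDl -!scalemxAr -!scalemxAl !mxE. Qed.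

Lemma sqnormE n (x : 'rV[R]_n) : sqnorm x = (x *m x^T) 0 0.
Proof. by rewrite mxE; apply: eq_bigr => i _; rewrite mxE expr2. Qed.

Lemma sqnorm_ge0 n (x : 'rV[R]_n) : 0 <= sqnorm x.
Proof. by apply: sumr_ge0 => i _; rewrite sqr_ge0. Qed.

Lemma sqnorm_gt0 n (x : 'rV[R]_n) : x != 0 -> 0 < sqnorm x.
Proof.
move=> x0; rewrite lt_def sqnorm_ge0 andbT; apply: contra x0 => /eqP x2.
have /psumr_eq0P x2_0 : forall i, true -> 0 <= x 0 i ^+ 2 by move=> i; rewrite sqr_ge0.
apply/eqP/rowP => i; apply/eqP; rewrite mxE -sqrf_eq0; exact/eqP/x2_0.
Qed.

Lemma sqnormZ n a (x : 'rV[R]_n) : sqnorm (a *: x) = a ^+ 2 * sqnorm x.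
Proof. by rewrite /sqnorm mulr_sumr; apply: eq_bigr => i _; rewrite mxE exprMn. Qed.

Lemma sqnormN n (x : 'rV[R]_n) : sqnorm (- x) = sqnorm x.
Proof. by rewrite -scaleN1r sqnormZ sqrrN expr1n mul1r. Qed.

Lemma bform_eigen n (A : 'M[R]_n) x lam : x *m A = lam *: x ->
  bform A x x = lam * sqnorm x.
Proof. by move=> xA; rewrite /bform xA -scalemxAl mxE sqnormE. Qed.

Lemma discriminant_le (A B C : R) : 0 <= C ->
  (forall s, 0 <= A + 2 * s * B + s ^+ 2 * C) -> B ^+ 2 <= A * C.
Proof.
move=> C0 ge0; have [Ceq0|CN0] := eqVneq C 0.
  have [B0|BN0] := eqVneq B 0; first by rewrite B0 Ceq0 expr0n mulr0.
  have := ge0 (- (A + 1) / (2 * B)).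
  have -> : 2 * (- (A + 1) / (2 * B)) * B = - (A + 1) by field.
  by rewrite Ceq0 mulr0 addr0; lra.
have Cgt0 : 0 < C by rewrite lt_def CN0.
have := ge0 (- B / C); rewrite -(ler_pM2r Cgt0) mul0r.
have -> : (A + 2 * (- B / C) * B + (- B / C) ^+ 2 * C) * C = A * C - B ^+ 2 by field.
by rewrite subr_ge0.
Qed.

Lemma cauchy_schwarz_psd n (A : 'M[R]_n) u v : A^T = A -> psd_form A ->
  bform A u v ^+ 2 <= bform A u u * bform A v v.
Proof.
move=> Asym Apsd; apply: discriminant_le => // s.
by have := Apsd (1 *: u + s *: v); rewrite bform_comb // expr1n mul1r mulr1.
Qed.

(* Where G = 0 both weights vanish, so x := 0 (the value of the junk division)
   still works; otherwise the inequality is Cauchy-Schwarz for the weights. *)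
Lemma rescale_sqr_le (t a b p q G : R) : 0 <= t <= 1 -> 0 <= p -> 0 <= q ->
  0 <= G -> G ^+ 2 = t * p ^+ 2 + (1 - t) * q ^+ 2 ->
  let x := (t * (a * p) + (1 - t) * (b * q)) / G in
  x * G = t * (a * p) + (1 - t) * (b * q) /\ x ^+ 2 <= t * a ^+ 2 + (1 - t) * b ^+ 2.
Proof.
move=> /andP[t0 t1] p0 q0 G0 G2 x.
have rhs0 : 0 <= t * a ^+ 2 + (1 - t) * b ^+ 2.
  by rewrite addr_ge0 // mulr_ge0 ?sqr_ge0 ?subr_ge0.
have [GE0|GN0] := eqVneq G 0.
  rewrite /x GE0 invr0 !mulr0 expr0n /=; split => //.
  rewrite GE0 expr0n /= in G2.
  have tp2 : t * p ^+ 2 = 0 by nra.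
  have tq2 : (1 - t) * q ^+ 2 = 0 by nra.
  have tp0 : t * p = 0.
    by apply/eqP; rewrite -sqrf_eq0 exprMn expr2 -mulrA tp2 mulr0.
  have tq0 : (1 - t) * q = 0.
    by apply/eqP; rewrite -sqrf_eq0 exprMn expr2 -mulrA tq2 mulr0.
  by rewrite mulrCA tp0 mulrCA tq0 !mulr0 addr0.
have G2gt0 : 0 < G ^+ 2 by rewrite exprn_gt0 // lt_def GN0.
split; first by rewrite /x divfK.
rewrite /x expr_div_n ler_pdivrMr // G2.
have : 0 <= t * (1 - t) * (a * q - b * p) ^+ 2.
  by rewrite mulr_ge0 ?sqr_ge0 // mulr_ge0 // subr_ge0.
nra.
Qed.

(* Multiplying by [A] turns the sum into two squares plus
   [(A * C - B ^+ 2) * (y1 ^+ 2 + y2 ^+ 2)]. *)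
Lemma binary_form_indefinite (A B C x1 y1 x2 y2 : R) : 0 < A ->
  0 < y1 ^+ 2 + y2 ^+ 2 ->
  x1 ^+ 2 * A + 2 * x1 * y1 * B + y1 ^+ 2 * C +
  (x2 ^+ 2 * A + 2 * x2 * y2 * B + y2 ^+ 2 * C) <= 0 ->
  A * C <= B ^+ 2.
Proof.
move=> A_gt0 y_gt0 le0; rewrite leNgt; apply/negP => disc_gt0.
have : 0 < (A * C - B ^+ 2) * (y1 ^+ 2 + y2 ^+ 2) by rewrite mulr_gt0 // subr_gt0.
have : 0 <= (A * x1 + B * y1) ^+ 2 + (A * x2 + B * y2) ^+ 2 by rewrite addr_ge0 ?sqr_ge0.
have : A * (x1 ^+ 2 * A + 2 * x1 * y1 * B + y1 ^+ 2 * C +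
  (x2 ^+ 2 * A + 2 * x2 * y2 * B + y2 ^+ 2 * C)) <= 0 by rewrite pmulr_rle0.
have -> : A * (x1 ^+ 2 * A + 2 * x1 * y1 * B + y1 ^+ 2 * C +
  (x2 ^+ 2 * A + 2 * x2 * y2 * B + y2 ^+ 2 * C)) =
  (A * x1 + B * y1) ^+ 2 + (A * x2 + B * y2) ^+ 2 +
  (A * C - B ^+ 2) * (y1 ^+ 2 + y2 ^+ 2) by ring.
lra.
Qed.

Lemma rescale_comb n (g g1 g2 u1 u2 : 'rV[R]_n) t : 0 <= t <= 1 ->
  (forall i, 0 <= g1 0 i) -> (forall i, 0 <= g2 0 i) -> (forall i, 0 <= g 0 i) ->
  (forall i, g 0 i ^+ 2 = t * g1 0 i ^+ 2 + (1 - t) * g2 0 i ^+ 2) ->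
  exists x, x *m diag_mx g = t *: (u1 *m diag_mx g1) + (1 - t) *: (u2 *m diag_mx g2)
    /\ sqnorm x <= t * sqnorm u1 + (1 - t) * sqnorm u2.
Proof.
move=> t01 g1_ge0 g2_ge0 g_ge0 g_sqr.
have rescale i := rescale_sqr_le (u1 0 i) (u2 0 i) t01 (g1_ge0 i) (g2_ge0 i)
  (g_ge0 i) (g_sqr i).
exists (\row_i ((t * (u1 0 i * g1 0 i) + (1 - t) * (u2 0 i * g2 0 i)) / g 0 i)); split.
  by apply/rowP => i; rewrite !mul_mx_diag !mxE; case: (rescale i).
rewrite /sqnorm !mulr_sumr -big_split; apply: ler_sum => i _; rewrite mxE.
by case: (rescale i).
Qed.

End BilinearForm.

Lemma char_poly_similar (F : fieldType) n (P A : 'M[F]_n) :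
  P \in unitmx -> char_poly (invmx P *m A *m P) = char_poly A.
Proof.
move=> Pu; rewrite /char_poly /char_poly_mx.
have VP : map_mx polyC (invmx P) *m map_mx polyC P = 1%:M.
  by rewrite -map_mxM mulVmx // map_mx1.
have -> : 'X%:M - map_mx polyC (invmx P *m A *m P) =
    map_mx polyC (invmx P) *m ('X%:M - map_mx polyC A) *m map_mx polyC P.
  by rewrite mulmxBr mulmxBl !map_mxM -!mulmxA mul_scalar_mx -scalemxAr VP scalemx1.
by rewrite !det_mulmx mulrAC -det_mulmx VP det1 mul1r.
Qed.

Section RealSymmetricSpectral.
Variable R : rcfType.
Local Notation C := R[i].
Local Notation toC := (real_complex R).
Local Open Scope sesquilinear_scope.

Lemma conj_real (x : R) : (toC x)^* = toC x.
Proof. by rewrite conj_Creal //; apply/complex_realP; exists x. Qed.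

Lemma real_mx_trC m n (A : 'M[R]_(m, n)) : (map_mx toC A)^t* = map_mx toC A^T.
Proof. by apply/matrixP => i j; rewrite !mxE conj_real. Qed.

Lemma bform_cplx n (A : 'M[R]_n) (u v : 'rV[R]_n) :
  toC (bform A u v) = ((map_mx toC u) *m cplx_mx A *m (map_mx toC v)^t*) 0 0.
Proof. by rewrite /bform real_mx_trC /cplx_mx -!map_mxM [RHS]mxE. Qed.

Lemma sqnorm_cplx n (x : 'rV[R]_n) :
  toC (sqnorm x) = ((map_mx toC x) *m (map_mx toC x)^t*) 0 0.
Proof. by rewrite sqnormE real_mx_trC -map_mxM [RHS]mxE. Qed.

Lemma symmetric_spectral n (T : 'M[R]_n) : T^T = T ->
  exists P (d : 'rV[R]_n),
    P \is unitarymx /\ cplx_mx T = P^t* *m diag_mx (map_mx toC d) *m P.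
Proof.
move=> Tsym.
have Treal : cplx_mx T \is a realmx.
  by apply/mxOverP => i j; rewrite mxE; apply/complex_realP; exists (T i j).
have Therm : cplx_mx T \is hermsymmx.
  by apply/is_hermitianmxP; rewrite expr0 scale1r real_mx_trC Tsym.
have /orthomx_spectralP Tdiag := hermitian_normalmx Therm.
have dreal := hermitian_spectral_diag_real Therm.
exists (spectralmx (cplx_mx T)), (map_mx (@complex.Re R) (spectral_diag (cplx_mx T))).
split; first exact: spectral_unitarymx.
rewrite -invmx_unitary ?spectral_unitarymx // {1}Tdiag; congr (_ *m diag_mx _ *m _).
by apply/matrixP => i j; rewrite !mxE RRe_real //; exact: (mxOverP dreal).
Qed.

Lemma Re_cplx_form n (A : 'M[R]_n) (z : 'rV[C]_n) :
  complex.Re ((z *m cplx_mx A *m z^t*) 0 0) =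
  bform A (map_mx (@complex.Re R) z) (map_mx (@complex.Re R) z) +
  bform A (map_mx (@complex.Im R) z) (map_mx (@complex.Im R) z).
Proof.
have Re_sum := raddf_sum (@complex.Re R : Rcomplex R -> R).
have Im_sum := raddf_sum (@complex.Im R : Rcomplex R -> R).
have ReM w x : complex.Re (w * toC x) = complex.Re w * x.
  by case: w => a b /=; rewrite mulr0 subr0.
have ImM w x : complex.Im (w * toC x) = complex.Im w * x.
  by case: w => a b /=; rewrite mulr0 add0r.
have ReMconj w y : complex.Re (w * y^*) =
    complex.Re w * complex.Re y + complex.Im w * complex.Im y.
  by case: w; case: y => a b c e /=; ring.
rewrite /bform !mxE Re_sum -big_split /=; apply: eq_bigr => j _.
rewrite !mxE ReMconj Re_sum Im_sum; congr (_ * _ + _ * _).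
- by apply: eq_bigr => i _; rewrite !mxE; exact: ReM.
- by apply: eq_bigr => i _; rewrite !mxE; exact: ImM.
Qed.

Section Decomposition.
Variables (n : nat) (P : 'M[C]_n) (d : 'rV[R]_n).
Hypothesis Punitary : P \is unitarymx.
Local Notation A := (P^t* *m diag_mx (map_mx toC d) *m P).

Lemma spectral_form (z : 'rV[C]_n) :
  (z *m A *m z^t*) 0 0 = \sum_j toC (d 0 j) * `|(z *m P^t*) 0 j| ^+ 2.
Proof.
have -> : z *m A *m z^t* = (z *m P^t*) *m diag_mx (map_mx toC d) *m (z *m P^t*)^t*.
  by rewrite trmx_mul map_mxM trmxCK !mulmxA.
rewrite mxE; apply: eq_bigr => j _.
by rewrite mul_mx_diag !mxE normCK mulrAC mulrC.
Qed.

Lemma spectral_sqnorm (z : 'rV[C]_n) :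
  (z *m z^t*) 0 0 = \sum_j `|(z *m P^t*) 0 j| ^+ 2.
Proof.
have -> : z *m z^t* = (z *m P^t*) *m (z *m P^t*)^t*.
  by rewrite trmx_mul map_mxM trmxCK mulmxA mulmxKtV.
by rewrite mxE; apply: eq_bigr => j _; rewrite !mxE normCK.
Qed.

Lemma spectral_char_poly :
  char_poly A = \prod_(j < n) ('X - (toC (d 0 j))%:P).
Proof.
rewrite -invmx_unitary // char_poly_similar ?unitarymx_unit //.
rewrite char_poly_trig ?diag_mx_is_trig //.
by apply: eq_bigr => j _; rewrite !mxE eqxx mulr1n.
Qed.

Variable T : 'M[R]_n.
Hypothesis Tspec : cplx_mx T = A.

Lemma spectral_eigenvector j : exists2 x : 'rV[R]_n, x *m T = d 0 j *: x & x != 0.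
Proof.
apply/eigenvalueP; rewrite -(eigenvalue_map toC) -/(cplx_mx T) Tspec.
apply/eigenvalueP; exists (row j P).
  rewrite -row_mul !mulmxA (unitarymxP Punitary) mul1mx.
  by apply/rowP => k; rewrite mul_diag_mx !mxE.
apply/eqP => Pj0; have := row_mul j P (P^t*).
rewrite Pj0 mul0mx (unitarymxP Punitary) => /rowP /(_ j) /eqP.
by rewrite !mxE eqxx oner_eq0.
Qed.

Lemma spectral_rayleigh_le lam : (forall j, d 0 j <= lam) ->
  forall x, bform T x x <= lam * sqnorm x.
Proof.
move=> dle x; rewrite -lecR rmorphM /= bform_cplx sqnorm_cplx Tspec.
rewrite spectral_form spectral_sqnorm mulr_sumr; apply: ler_sum => j _.
by rewrite ler_wpM2r ?exprn_ge0 // lecR.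
Qed.

Lemma spectral_psd : (forall j, 0 <= d 0 j) -> psd_form T.
Proof.
move=> dge0 x; rewrite -ler0c bform_cplx Tspec spectral_form.
by apply: sumr_ge0 => j _; rewrite mulr_ge0 ?exprn_ge0 // ler0c.
Qed.

Lemma spectral_form_le0 j0 (z : 'rV[C]_n) : (forall j, j != j0 -> d 0 j <= 0) ->
  (z *m P^t*) 0 j0 = 0 -> (z *m cplx_mx T *m z^t*) 0 0 <= 0.
Proof.
move=> d_le0 zj0; rewrite Tspec spectral_form; apply: sumr_le0 => j _.
have [->|jNj0] := eqVneq j j0; first by rewrite zj0 normr0 expr0n mulr0.
by rewrite mulr_le0_ge0 ?exprn_ge0 // -(rmorph0 toC) lecR d_le0.
Qed.

(* On real vectors [u], [v], the combination [z = l(v) u - l(u) v] kills the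
   coordinate [l] along the positive eigenvalue, and the real form is
   nonpositive on both [Re z] and [Im z]. *)
Lemma spectral_lorentzian : T^T = T ->
  (forall j1 j2, 0 < d 0 j1 -> 0 < d 0 j2 -> j1 = j2) -> lorentzian T.
Proof.
move=> Tsym dpos_uniq u v Qu_gt0.
have [j0 dj0_gt0|dle0] := pickP (fun j => 0 < d 0 j); last first.
  suff : bform T u u <= 0 by rewrite leNgt Qu_gt0.
  rewrite -lecR bform_cplx Tspec spectral_form; apply: sumr_le0 => j _.
  by rewrite mulr_le0_ge0 ?exprn_ge0 // -(rmorph0 toC) lecR leNgt dle0.
have d_le0 j : j != j0 -> d 0 j <= 0.
  by apply: contraNT; rewrite -ltNge => /dpos_uniq -/(_ _ dj0_gt0) ->.
pose l (z : 'rV[C]_n) := (z *m P^t*) 0 j0.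
have Re_le0 z : l z = 0 -> complex.Re ((z *m cplx_mx T *m z^t*) 0 0) <= 0.
  by move=> /(spectral_form_le0 d_le0); rewrite lecE => /andP[].
set a := l (map_mx toC v); set b := l (map_mx toC u).
have b_neq0 : b != 0.
  apply: contraTneq Qu_gt0 => /Re_le0.
  by rewrite -bform_cplx /= -leNgt.
pose z := a *: map_mx toC u - b *: map_mx toC v.
have lz0 : l z = 0 by rewrite /z /a /b /l mulmxBl -!scalemxAl !mxE; ring.
have := Re_le0 z lz0; rewrite Re_cplx_form.
have -> : map_mx (@complex.Re R) z = complex.Re a *: u + (- complex.Re b) *: v.
  by apply/rowP => i; rewrite !mxE; case: (a) (b) => [a1 a2] [b1 b2] /=; ring.
have -> : map_mx (@complex.Im R) z = complex.Im a *: u + (- complex.Im b) *: v.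
  by apply/rowP => i; rewrite !mxE; case: (a) (b) => [a1 a2] [b1 b2] /=; ring.
rewrite !bform_comb // => le0; apply: binary_form_indefinite Qu_gt0 _ le0.
rewrite !sqrrN lt0r addr_ge0 ?sqr_ge0 // andbT; apply: contra b_neq0.
case: (b) => b1 b2 /=; rewrite paddr_eq0 ?sqr_ge0 // !sqrf_eq0.
by case/andP => /eqP-> /eqP->.
Qed.

End Decomposition.
End RealSymmetricSpectral.

Lemma eigenvalue_mulmxC (F : fieldType) n (A B : 'M[F]_n) z : z != 0 ->
  eigenvalue (A *m B) z -> eigenvalue (B *m A) z.
Proof.
move=> z_neq0 /eigenvalueP [v vAB v_neq0]; apply/eigenvalueP; exists (v *m A).
  by rewrite mulmxA -(mulmxA v) vAB scalemxAl.
apply: contra_neq v_neq0 => vA0.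
have : z *: v == 0 by rewrite -vAB mulmxA vA0 mul0mx.
by rewrite scaler_eq0 (negbTE z_neq0) => /eqP.
Qed.

Section SpectralRadius.
Variable R : realType.
Local Notation toC := (real_complex R).
Local Open Scope sesquilinear_scope.
Local Open Scope classical_set_scope.

Lemma cmod_ge0 (z : R[i]) : 0 <= cmod z.
Proof. exact: sqrtr_ge0. Qed.

Lemma cmod_real (x : R) : cmod (toC x) = `|x|.
Proof. by rewrite /cmod /= expr0n addr0 sqrtr_sqr. Qed.

Lemma cmodE (z : R[i]) : toC (cmod z) = `|z|.
Proof. by rewrite normc_def. Qed.

Lemma eigenvalues_mulmxC n (A B : 'M[R]_n) z : z != 0 ->
  eigenvalues (A *m B) z -> eigenvalues (B *m A) z.
Proof.
rewrite /eigenvalues /= -!eigenvalue_root_char /cplx_mx !map_mxM.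
exact: eigenvalue_mulmxC.
Qed.

(* Perron's bound: test the form on the vector of moduli of an eigenvector. *)
Lemma eigenvalue_cmod_le n (T : 'M[R]_n) lam : (forall i j, 0 <= T i j) ->
  (forall x, bform T x x <= lam * sqnorm x) ->
  forall z, eigenvalues T z -> cmod z <= lam.
Proof.
move=> T_ge0 rayleigh z; rewrite /eigenvalues /= -eigenvalue_root_char.
case/eigenvalueP => u uT u_neq0.
pose a : 'rV[R]_n := \row_i cmod (u 0 i).
have a_neq0 : a != 0.
  apply: contra_neq u_neq0 => a0; apply/rowP => i.
  have : a 0 i = 0 by rewrite a0 mxE.
  by rewrite !mxE => ai0; apply/eqP; rewrite -normr_eq0 -cmodE ai0 rmorph0.
have sqnorm_a : toC (sqnorm a) = (u *m u^t*) 0 0.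
  rewrite /sqnorm (rmorph_sum toC) [RHS]mxE; apply: eq_bigr => i _.
  by rewrite !mxE rmorphXn /= cmodE normCK.
have form_le : `|(u *m cplx_mx T *m u^t*) 0 0| <= toC (bform T a a).
  rewrite /bform !mxE rmorph_sum /=; apply: le_trans (ler_norm_sum _ _ _) _.
  apply: ler_sum => j _; rewrite normrM !mxE rmorphM /= cmodE norm_conjC.
  rewrite ler_wpM2r // rmorph_sum /=; apply: le_trans (ler_norm_sum _ _ _) _.
  apply: ler_sum => i _; rewrite normrM !mxE rmorphM /= cmodE ler_wpM2l //.
  by rewrite ger0_norm // ler0c.
have form_eq : (u *m cplx_mx T *m u^t*) 0 0 = z * toC (sqnorm a).
  by rewrite uT -scalemxAl mxE sqnorm_a.
have a_gt0 : 0 < toC (sqnorm a) by rewrite -(rmorph0 toC) ltcR sqnorm_gt0.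
have : `|z| * toC (sqnorm a) <= toC lam * toC (sqnorm a).
  rewrite -(gtr0_norm a_gt0) -normrM -form_eq (gtr0_norm a_gt0) -rmorphM.
  by apply: le_trans form_le _; rewrite lecR.
by rewrite ler_pM2r // -cmodE lecR.
Qed.

Lemma eigenvalues_real n (A : 'M[R]_n) (x : 'rV[R]_n) lam :
  x *m A = lam *: x -> x != 0 -> eigenvalues A (toC lam).
Proof.
move=> xA x_neq0; rewrite /eigenvalues /= -eigenvalue_root_char eigenvalue_map.
by apply/eigenvalueP; exists x.
Qed.

Lemma spectral_radius_eq n (A : 'M[R]_n) lam : (0 < n)%N -> 0 <= lam ->
  (forall z, eigenvalues A z -> z != 0 -> cmod z <= lam) ->
  (lam != 0 -> eigenvalues A (toC lam)) -> spectral_radius A = lam.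
Proof.
move=> n_gt0 lam_ge0 le_lam lam_eig.
have ub : ubound [set cmod z | z in eigenvalues A] lam.
  move=> _ [z Az <-]; have [->|] := eqVneq z 0; last exact: le_lam.
  by rewrite -(rmorph0 toC) cmod_real normr0.
have [r Ar lam_le] : exists2 r, [set cmod z | z in eigenvalues A] r & lam <= r.
  have [lam0|lam_neq0] := eqVneq lam 0.
    have [z Az] := eigenvalue_closed (cplx_mx A) n_gt0.
    exists (cmod z); last by rewrite lam0 cmod_ge0.
    by exists z => //; rewrite /eigenvalues /= -eigenvalue_root_char.
  by exists lam => //; exists (toC lam); rewrite ?cmod_real ?ger0_norm //; exact: lam_eig.
apply/le_anti/andP; split; first by apply: ge_sup => //; exists r.
by apply: le_trans lam_le (ub_le_sup _ Ar); exists lam.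
Qed.

Lemma symmetric_nonneg_top_eigenvalue n (T : 'M[R]_n) : (0 < n)%N -> T^T = T ->
  (forall i j, 0 <= T i j) -> exists lam : R, [/\ 0 <= lam, rayleigh_max T lam &
    forall z, eigenvalues T z -> cmod z <= lam].
Proof.
move=> n_gt0 Tsym T_ge0; have [P [d [Punitary Tspec]]] := symmetric_spectral Tsym.
pose j0 := Order.arg_max (Ordinal n_gt0) xpredT (fun j => d 0 j).
have d_le j : d 0 j <= d 0 j0 by rewrite /j0; case: arg_maxP => // i _; apply.
have rayleigh := spectral_rayleigh_le Punitary Tspec d_le.
have [x xT x_neq0] := spectral_eigenvector Punitary Tspec j0.
have cmod_le := eigenvalue_cmod_le T_ge0 rayleigh.
exists (d 0 j0); split => //; last by split => //; exists x.
apply: le_trans (normr_ge0 (d 0 j0)) _; rewrite -cmod_real.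
exact: cmod_le (eigenvalues_real xT x_neq0).
Qed.

End SpectralRadius.

Section UnitCube.
Variable R : realType.

Lemma cube_ge0 N (eta : 'rV[R]_N) : in_unit_cube eta -> forall i, 0 <= eta 0 i.
Proof. by move=> eta_cube i; case/andP: (eta_cube i). Qed.

Lemma comb_ge0 N (e1 e2 : 'rV[R]_N) t :
  (forall i, 0 <= e1 0 i) -> (forall i, 0 <= e2 0 i) -> 0 <= t <= 1 ->
  forall i, 0 <= (t *: e1 + (1 - t) *: e2) 0 i.
Proof.
move=> e1_ge0 e2_ge0 /andP[t_ge0 t_le1] i; rewrite !mxE.
by rewrite addr_ge0 // mulr_ge0 // subr_ge0.
Qed.

End UnitCube.

Section DiagonallySymmetrizable.
Variable R : realType.
Local Notation toC := (real_complex R).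
Local Open Scope sesquilinear_scope.
Variables (N : nat) (d : 'rV[R]_N) (S : 'M[R]_N).
Hypotheses (N_gt0 : (0 < N)%N) (d_gt0 : forall i, 0 < d 0 i).
Hypotheses (Ssym : S^T = S) (S_ge0 : forall i j, 0 <= S i j).

Local Notation K := (diag_mx d *m S).

Definition weight (eta : 'rV[R]_N) : 'rV[R]_N := \row_i (eta 0 i * d 0 i).

Definition sqrt_weight (eta : 'rV[R]_N) : 'rV[R]_N := \row_i Num.sqrt (eta 0 i * d 0 i).

Local Notation G eta := (diag_mx (sqrt_weight eta)).

Definition Ksym (eta : 'rV[R]_N) : 'M[R]_N := G eta *m S *m G eta.

Lemma sqrt_weight_ge0 eta i : 0 <= sqrt_weight eta 0 i.
Proof. by rewrite mxE sqrtr_ge0. Qed.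

Lemma diag_sqrt_weightM (eta : 'rV[R]_N) : (forall i, 0 <= eta 0 i) ->
  G eta *m G eta = diag_mx (weight eta).
Proof.
move=> eta_ge0; rewrite mulmx_diag; congr diag_mx; apply/rowP => i.
by rewrite !mxE -expr2 sqr_sqrtr // mulr_ge0 // ltW.
Qed.

Lemma Ksym_sym (eta : 'rV[R]_N) : (Ksym eta)^T = Ksym eta.
Proof. by rewrite /Ksym !trmx_mul tr_diag_mx Ssym mulmxA. Qed.

Lemma Ksym_ge0 eta i j : 0 <= Ksym eta i j.
Proof.
by rewrite /Ksym mul_mx_diag mul_diag_mx !mxE !mulr_ge0 ?sqrtr_ge0.
Qed.

Lemma bform_Ksym (eta : 'rV[R]_N) x y :
  bform (Ksym eta) x y = bform S (x *m G eta) (y *m G eta).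
Proof. by rewrite -bform_congr tr_diag_mx. Qed.

Lemma eigenvalues_Ksym (eta : 'rV[R]_N) z : (forall i, 0 <= eta 0 i) -> z != 0 ->
  eigenvalues (K *m diag_mx eta) z <-> eigenvalues (Ksym eta) z.
Proof.
move=> eta_ge0 z_neq0.
have swap : S *m diag_mx eta *m diag_mx d = S *m G eta *m G eta.
  by rewrite -!mulmxA diag_sqrt_weightM // mulmx_diag.
rewrite -[K *m _]mulmxA /Ksym -[G eta *m S *m _]mulmxA.
split=> /(eigenvalues_mulmxC z_neq0); first by rewrite swap => /eigenvalues_mulmxC; apply.
by rewrite -swap => /eigenvalues_mulmxC; apply.
Qed.

Lemma Re_fun_rayleigh_max (eta : 'rV[R]_N) : (forall i, 0 <= eta 0 i) ->
  0 <= Re_fun K eta /\ rayleigh_max (Ksym eta) (Re_fun K eta).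
Proof.
move=> eta_ge0.
have [lam [lam_ge0 [rayleigh [x xK x_neq0]] cmod_le]] :=
  symmetric_nonneg_top_eigenvalue N_gt0 (Ksym_sym eta) (@Ksym_ge0 eta).
suff -> : Re_fun K eta = lam by split=> //; split=> //; exists x.
apply: spectral_radius_eq => // [z Kz z_neq0|lam_neq0].
  by apply: cmod_le; rewrite -eigenvalues_Ksym.
rewrite eigenvalues_Ksym //; last by rewrite -(rmorph0 toC) (inj_eq (@complexI R)).
exact: eigenvalues_real xK x_neq0.
Qed.

Definition sqrt_d : 'M[R]_N := diag_mx (\row_i Num.sqrt (d 0 i)).

Lemma sqrt_d_unit : sqrt_d \in unitmx.
Proof.
rewrite unitmxE det_diag unitfE; apply/prodf_neq0 => i _.
by rewrite mxE sqrtr_eq0 -ltNge d_gt0.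
Qed.

Definition Ksim : 'M[R]_N := sqrt_d *m S *m sqrt_d.

Lemma Ksim_sym : Ksim^T = Ksim.
Proof. by rewrite /Ksim !trmx_mul tr_diag_mx Ssym mulmxA. Qed.

Lemma K_similar : K = invmx (invmx sqrt_d) *m Ksim *m invmx sqrt_d.
Proof.
rewrite invmxK /Ksim !mulmxA mulmxK ?sqrt_d_unit // mulmx_diag.
congr (diag_mx _ *m _); apply/rowP => i.
by rewrite !mxE -expr2 sqr_sqrtr // ltW.
Qed.

Lemma bform_Ksim u v : bform S u v = bform Ksim (u *m invmx sqrt_d) (v *m invmx sqrt_d).
Proof.
rewrite -bform_congr /Ksim trmx_inv tr_diag_mx !mulmxA mulVmx ?sqrt_d_unit // mul1mx.
by rewrite -mulmxA mulmxV ?sqrt_d_unit // mulmx1.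
Qed.

Lemma K_spectral : exists P (e : 'rV[R]_N), [/\ P \is unitarymx,
  cplx_mx Ksim = P^t* *m diag_mx (map_mx toC e) *m P &
  char_poly (cplx_mx K) = \prod_(j < N) ('X - (toC (e 0 j))%:P)].
Proof.
have [P [e [Punitary Sspec]]] := symmetric_spectral Ksim_sym.
exists P, e; split => //; rewrite -(spectral_char_poly e Punitary) -Sspec K_similar.
rewrite /cplx_mx !map_mxM !map_invmx char_poly_similar //.
by rewrite unitmx_inv map_unitmx sqrt_d_unit.
Qed.

Lemma eigenvalues_K_spectral (e : 'rV[R]_N) j :
  char_poly (cplx_mx K) = \prod_(j < N) ('X - (toC (e 0 j))%:P) ->
  eigenvalues K (toC (e 0 j)).
Proof.
move=> charK; rewrite /eigenvalues /= charK /root horner_prod (bigD1 j) //=.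
by rewrite hornerXsubC subrr mul0r.
Qed.

Lemma S_psd : (forall z, eigenvalues K z -> exists x : R, 0 <= x /\ z = toC x) ->
  psd_form S.
Proof.
move=> Kspec; have [P [e [Punitary Sspec charK]]] := K_spectral.
have Ksim_psd : psd_form Ksim.
  apply: (spectral_psd Sspec) => j.
  by have [x [x_ge0 /complexI ->]] := Kspec _ (eigenvalues_K_spectral j charK).
by move=> v; rewrite bform_Ksim.
Qed.

Lemma S_lorentzian rho : alg_mult K (toC rho) = 1%N ->
  (forall z, eigenvalues K z -> z = toC rho \/ exists x : R, x <= 0 /\ z = toC x) ->
  lorentzian S.
Proof.
move=> simple Kspec; have [P [e [Punitary Sspec charK]]] := K_spectral.
suff : lorentzian Ksim by move=> Ksim_lor u v; rewrite !bform_Ksim; apply: Ksim_lor.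
apply: (spectral_lorentzian Sspec Ksim_sym).
have pos_rho j : 0 < e 0 j -> e 0 j = rho.
  move=> ej_gt0; case: (Kspec _ (eigenvalues_K_spectral j charK)) => [/complexI //|].
  by case=> x [x_le0 /complexI ej]; move: ej_gt0; rewrite ej ltNge x_le0.
move=> j1 j2 /pos_rho e1 /pos_rho e2; apply/eqP; apply: contraT => j12.
have : (2 <= alg_mult K (toC rho))%N.
  rewrite /alg_mult mup_geq ?monic_neq0 ?char_poly_monic // charK.
  rewrite (bigD1 j1) // (bigD1 j2) 1?eq_sym //= e1 e2 expr2 mulrA dvdp_mulr //.
by rewrite simple.
Qed.

Lemma bform_weight (e : 'rV[R]_N) c : (forall i, 0 <= e 0 i) ->
  bform (diag_mx (weight e)) c c = sqnorm (c *m G e).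
Proof.
by move=> e_ge0; rewrite -diag_sqrt_weightM // sqnormE /bform trmx_mul tr_diag_mx !mulmxA.
Qed.

Lemma weight_comb (e1 e2 : 'rV[R]_N) a b :
  diag_mx (weight (a *: e1 + b *: e2)) =
  a *: diag_mx (weight e1) + b *: diag_mx (weight e2).
Proof.
apply/matrixP => i j; rewrite !mxE.
by case: (i == j); rewrite ?mulr1n ?mulr0n; ring.
Qed.

Lemma sqrt_weight_comb (e1 e2 : 'rV[R]_N) t :
  (forall i, 0 <= e1 0 i) -> (forall i, 0 <= e2 0 i) -> 0 <= t <= 1 -> forall i,
  sqrt_weight (t *: e1 + (1 - t) *: e2) 0 i ^+ 2 =
  t * sqrt_weight e1 0 i ^+ 2 + (1 - t) * sqrt_weight e2 0 i ^+ 2.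
Proof.
move=> e1_ge0 e2_ge0 t01 i; have := comb_ge0 e1_ge0 e2_ge0 t01 i.
rewrite !mxE => eta_i_ge0.
by rewrite !sqr_sqrtr ?mulr_ge0 ?e1_ge0 ?e2_ge0 ?(ltW (d_gt0 i)) // mulrDl !mulrA.
Qed.

Section TopEigenvalue.
(* [lam] stands for [Re_fun K]: only its Rayleigh characterization is used. *)
Variable lam : 'rV[R]_N -> R.
Hypothesis lam_max : forall e : 'rV[R]_N, (forall i, 0 <= e 0 i) ->
  0 <= lam e /\ rayleigh_max (Ksym e) (lam e).

(* Cauchy-Schwarz for [S] between [y] and [y S Diag(weight e)]. *)
Lemma weighted_form_le (e : 'rV[R]_N) y : psd_form S -> (forall i, 0 <= e 0 i) ->
  bform (diag_mx (weight e)) (y *m S) (y *m S) <= bform S y y * lam e.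
Proof.
move=> Spsd e_ge0; have [lam_ge0 [rayleigh _]] := lam_max e_ge0.
set Q := bform _ _ _; pose z := y *m S *m G e.
have Qz : Q = sqnorm z by rewrite /Q bform_weight.
have Q_ge0 : 0 <= Q by rewrite Qz sqnorm_ge0.
have yw : bform S y (z *m G e) = Q.
  rewrite /Q -diag_sqrt_weightM // /bform /z !trmx_mul !tr_diag_mx Ssym.
  by rewrite !mulmxA.
have ww : bform S (z *m G e) (z *m G e) <= lam e * Q.
  by rewrite Qz -bform_Ksym rayleigh.
have := cauchy_schwarz_psd y (z *m G e) Ssym Spsd; rewrite yw => CS.
have [->|Q_neq0] := eqVneq Q 0; first by rewrite mulr_ge0.
have Q_gt0 : 0 < Q by rewrite lt_def Q_neq0.
have : Q * Q <= bform S y y * lam e * Q.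
  by rewrite -expr2 -mulrA (le_trans CS) // ler_wpM2l.
by rewrite ler_pM2r.
Qed.

Lemma weighted_form_eigen (e : 'rV[R]_N) x : (forall i, 0 <= e 0 i) ->
  x *m Ksym e = lam e *: x ->
  bform (diag_mx (weight e)) (x *m G e *m S) (x *m G e *m S) =
  lam e * bform S (x *m G e) (x *m G e).
Proof.
move=> e_ge0 xK; rewrite bform_weight // -bform_Ksym (bform_eigen xK).
have -> : x *m G e *m S *m G e = x *m Ksym e by rewrite /Ksym !mulmxA.
by rewrite xK sqnormZ mulrA expr2.
Qed.

Lemma top_eigenvalue_convex : psd_form S -> convex_on_cube lam.
Proof.
move=> Spsd e1 e2 t e1_cube e2_cube t01.
have e1_ge0 := cube_ge0 e1_cube; have e2_ge0 := cube_ge0 e2_cube.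
have eta_ge0 := comb_ge0 e1_ge0 e2_ge0 t01.
set eta := t *: e1 + (1 - t) *: e2 in eta_ge0 *.
have [f_ge0 [_ [x xK x_neq0]]] := lam_max eta_ge0.
have [[f1_ge0 _] [f2_ge0 _]] := (lam_max e1_ge0, lam_max e2_ge0).
case/andP: t01 => t_ge0 t_le1.
have [f0|f_neq0] := eqVneq (lam eta) 0.
  by rewrite f0 addr_ge0 // mulr_ge0 // subr_ge0.
have p_gt0 : 0 < bform S (x *m G eta) (x *m G eta).
  by rewrite -bform_Ksym (bform_eigen xK) mulr_gt0 ?sqnorm_gt0 // lt_def f_neq0.
rewrite -(ler_pM2r p_gt0) -(weighted_form_eigen eta_ge0 xK) weight_comb bform_linear_mx.
rewrite (mulrDl _ _ (bform S _ _)) -!mulrA.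
by apply: lerD; apply: ler_wpM2l; rewrite ?subr_ge0 // mulrC weighted_form_le.
Qed.

Lemma top_eigenvector_normalized (e : 'rV[R]_N) : (forall i, 0 <= e 0 i) ->
  exists u, u *m Ksym e = lam e *: u /\ sqnorm u = lam e.
Proof.
move=> e_ge0; have [lam_ge0 [_ [x xK x_neq0]]] := lam_max e_ge0.
have x_gt0 := sqnorm_gt0 x_neq0.
exists (Num.sqrt (lam e / sqnorm x) *: x); split.
  by rewrite -scalemxAl xK !scalerA mulrC.
rewrite sqnormZ sqr_sqrtr ?divfK ?lt0r_neq0 //.
by rewrite divr_ge0 // ltW.
Qed.

Lemma bform_top_eigenvector (e : 'rV[R]_N) u :
  u *m Ksym e = lam e *: u -> sqnorm u = lam e ->
  bform S (u *m G e) (u *m G e) = lam e ^+ 2.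
Proof. by move=> uK u_norm; rewrite -bform_Ksym (bform_eigen uK) u_norm expr2. Qed.

(* Reverse Cauchy-Schwarz, after choosing the sign of [u2]. *)
Lemma lorentzian_top_eigenvectors (e1 e2 : 'rV[R]_N) : lorentzian S ->
  (forall i, 0 <= e1 0 i) -> (forall i, 0 <= e2 0 i) ->
  exists u1 u2, [/\ u1 *m Ksym e1 = lam e1 *: u1, sqnorm u1 = lam e1,
    u2 *m Ksym e2 = lam e2 *: u2, sqnorm u2 = lam e2 &
    lam e1 * lam e2 <= bform S (u1 *m G e1) (u2 *m G e2)].
Proof.
move=> Slor e1_ge0 e2_ge0.
have [[f1_ge0 _] [f2_ge0 _]] := (lam_max e1_ge0, lam_max e2_ge0).
have [u1 [u1K u1_norm]] := top_eigenvector_normalized e1_ge0.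
have [v [vK v_norm]] := top_eigenvector_normalized e2_ge0.
have [u2 [u2K u2_norm beta_ge0]] : exists u2, [/\ u2 *m Ksym e2 = lam e2 *: u2,
    sqnorm u2 = lam e2 & 0 <= bform S (u1 *m G e1) (u2 *m G e2)].
  have [beta_ge0|beta_lt0] := leP 0 (bform S (u1 *m G e1) (v *m G e2)).
    by exists v.
  exists (- v); rewrite mulNmx vK scalerN sqnormN mulNmx bformNr oppr_ge0.
  by split => //; apply: ltW.
exists u1, u2; split => //.
have [->|f1_neq0] := eqVneq (lam e1) 0; first by rewrite mul0r.
have f1_gt0 : 0 < lam e1 ^+ 2 by rewrite exprn_gt0 // lt_def f1_neq0.
have := Slor (u1 *m G e1) (u2 *m G e2).
rewrite !bform_top_eigenvector // -exprMn => /(_ f1_gt0).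
by rewrite ler_sqr // nnegrE mulr_ge0.
Qed.

Lemma top_eigenvalue_concave : lorentzian S -> concave_on_cube lam.
Proof.
move=> Slor e1 e2 t e1_cube e2_cube t01.
have e1_ge0 := cube_ge0 e1_cube; have e2_ge0 := cube_ge0 e2_cube.
have eta_ge0 := comb_ge0 e1_ge0 e2_ge0 t01.
set eta := t *: e1 + (1 - t) *: e2 in eta_ge0 *.
have [f_ge0 [rayleigh _]] := lam_max eta_ge0.
have [[f1_ge0 _] [f2_ge0 _]] := (lam_max e1_ge0, lam_max e2_ge0).
have [u1 [u2 [u1K u1_norm u2K u2_norm beta_ge]]] :=
  lorentzian_top_eigenvectors Slor e1_ge0 e2_ge0.
have [x [xG x_norm]] := rescale_comb u1 u2 t01 (sqrt_weight_ge0 e1)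
  (sqrt_weight_ge0 e2) (sqrt_weight_ge0 eta) (sqrt_weight_comb e1_ge0 e2_ge0 t01).
case/andP: t01 => t_ge0 t_le1.
set s := t * lam e1 + (1 - t) * lam e2.
have s2_le : s ^+ 2 <= bform S (x *m G eta) (x *m G eta).
  rewrite xG bform_comb // !bform_top_eigenvector //.
  have -> : s ^+ 2 = t ^+ 2 * lam e1 ^+ 2 + 2 * t * (1 - t) * (lam e1 * lam e2) +
    (1 - t) ^+ 2 * lam e2 ^+ 2 by rewrite /s; ring.
  by rewrite lerD2r lerD2l ler_wpM2l // !mulr_ge0 // subr_ge0.
have le_fs : bform S (x *m G eta) (x *m G eta) <= lam eta * s.
  rewrite -bform_Ksym; apply: le_trans (rayleigh x) (ler_wpM2l f_ge0 _).
  by rewrite /s -u1_norm -u2_norm.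
have [->|s_neq0] := eqVneq s 0; first exact: f_ge0.
have s_gt0 : 0 < s by rewrite lt_def s_neq0 addr_ge0 // mulr_ge0 // subr_ge0.
by rewrite -(ler_pM2r s_gt0) -expr2 (le_trans s2_le le_fs).
Qed.

End TopEigenvalue.

End DiagonallySymmetrizable.

Theorem theorem4p1 (R : realType) (N : nat) (hN : (1 <= N)%N) (K : 'M[R]_N) :
  (forall i j, 0 <= K i j) ->
  diag_symmetrizable K ->
  ((forall z, eigenvalues K z -> exists x : R, 0 <= x /\ z = x%:C%C) ->
     convex_on_cube (Re_fun K)) /\
  (alg_mult K (spectral_radius K)%:C%C = 1%N ->
   (forall z, eigenvalues K z ->
      z = (spectral_radius K)%:C%C \/ exists x : R, x <= 0 /\ z = x%:C%C) ->
     concave_on_cube (Re_fun K)).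
Proof.
move=> K_ge0 [d [S [d_gt0 [Ssym K_eq]]]]; subst K.
have S_ge0 i j : 0 <= S i j.
  by have := K_ge0 i j; rewrite mul_diag_mx mxE pmulr_rge0.
have Re_max := Re_fun_rayleigh_max hN d_gt0 Ssym S_ge0.
split => [Kspec | simple Kspec].
  exact: top_eigenvalue_convex Re_max (S_psd d_gt0 Ssym Kspec).
exact: top_eigenvalue_concave Re_max (S_lorentzian d_gt0 Ssym simple Kspec).
Qed.
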